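(* For every grounding tree $\Gamma[\Delta]\blacktriangleright A$ of size greater than $1$, one can derive from it, using only $\triangleright$ elimination rules, all the immediate grounding claims that compose it, and one can derive $\Gamma[\Delta]\blacktriangleright A$ from these immediate grounding claims using only $\triangleright$ introduction rules.
   Context: Language: grounding trees are formulae $\Gamma[\Delta]\blacktriangleright A$ where $\Gamma,\Delta$ are finite lists ($\Delta$ possibly empty) whose elements are either formulae or expressions $(\Theta[\Sigma])\triangleright B$, with $B$ a formula and $\Theta,\Sigma$ again such lists (nesting arbitrarily). An immediate grounding claim is such a formula in which no element of $\Gamma,\Delta$ has the form $(\cdot)\triangleright\cdot$. The immediate grounding claims composing a grounding tree $\Gamma[\Delta]\blacktriangleright A$ are defined recursively: if the elements of $\Gamma,\Delta$ of the form $(\cdot)\triangleright\cdot$ are $(\Gamma_i[\Delta_i])\triangleright A_i$ ($1\le i\le n$), they are the immediate grounding claim obtained by replacing each $(\Gamma_i[\Delta_i])\triangleright A_i$ with $A_i$, together with the immediate grounding claims composing each $\Gamma_i[\Delta_i]\blacktriangleright A_i$. Size: an immediate grounding claim has size $1$; if the elements of $\Gamma$ and $\Delta$ with outermost operator $\triangleright$ are $(\Gamma_1[\Delta_1])\triangleright A_1,\dots,(\Gamma_n[\Delta_n])\triangleright A_n$, then $|\Gamma[\Delta]\blacktriangleright A| = |\Gamma_1[\Delta_1]\blacktriangleright A_1|+\dots+|\Gamma_n[\Delta_n]\blacktriangleright A_n|+1$. Rules for $\triangleright$: Introductions: from $\Delta[\Theta]\blacktriangleright A$ and $\Gamma_1,A,\Gamma_2[\Xi]\blacktriangleright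 B$ infer $\Gamma_1,(\Delta[\Theta])\triangleright A,\Gamma_2[\Xi]\blacktriangleright B$; from $\Delta[\Theta]\blacktriangleright C$ and $\Gamma[\Xi_1,C,\Xi_2]\blacktriangleright B$ infer $\Gamma[\Xi_1,(\Delta[\Theta])\triangleright C,\Xi_2]\blacktriangleright B$. Eliminations: from $\Gamma_1,(\Delta[\Theta])\triangleright A,\Gamma_2[\Xi]\blacktriangleright B$ infer $\Delta[\Theta]\blacktriangleright A$ and $\Gamma_1,A,\Gamma_2[\Xi]\blacktriangleright B$; from $\Gamma[\Xi_1,(\Delta[\Theta])\triangleright C,\Xi_2]\blacktriangleright B$ infer $\Delta[\Theta]\blacktriangleright C$ and $\Gamma[\Xi_1,C,\Xi_2]\blacktriangleright B$. *)

From Stdlib Require Import List Arith.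
Import ListNotations.
Set Implicit Arguments.

Section Grounding.
Variable F : Type. (* the type of formulae of the underlying language *)

(* An element of a list Γ or Δ: either a formula, or (Θ[Σ]) ▷ B. *)
Inductive item : Type :=
| Fm  : F -> item
| Tri : list item -> list item -> F -> item.

(* A grounding tree Γ[Δ] ▶ A. *)
Inductive gtree : Type := GT : list item -> list item -> F -> gtree.

Definition strip (i : item) : item :=
  match i with Fm A => Fm A | Tri _ _ B => Fm B end.

Definition is_formula (i : item) : Prop :=
  match i with Fm _ => True | Tri _ _ _ => False end.

Definition immediate (t : gtree) : Prop :=
  match t with GT G D _ => Forall is_formula G /\ Forall is_formula D end.

Fixpoint item_comps (i : item) : list gtree :=
  match i with
  | Fm _ => []
  | Tri G D B =>
      GT (map strip G) (map strip D) B ::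
        ((fix lc (l : list item) : list gtree :=
            match l with [] => [] | x :: l' => item_comps x ++ lc l' end) G
         ++
         (fix lc (l : list item) : list gtree :=
            match l with [] => [] | x :: l' => item_comps x ++ lc l' end) D)
  end.

Definition components (t : gtree) : list gtree :=
  match t with GT G D A => item_comps (Tri G D A) end.

Fixpoint item_size (i : item) : nat :=
  match i with
  | Fm _ => 0
  | Tri G D B =>
      1 + (fix ls (l : list item) : nat :=
             match l with [] => 0 | x :: l' => item_size x + ls l' end) G
        + (fix ls (l : list item) : nat :=
             match l with [] => 0 | x :: l' => item_size x + ls l' end) D
  end.

Definition gsize (t : gtree) : nat :=
  match t with GT G D A => item_size (Tri G D A) end.

Inductive der_elim (H : gtree -> Prop) : gtree -> Prop :=
| de_hyp : forall t, H t -> der_elim H t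
| de_elimL1 : forall G1 G2 D T A X B,
    der_elim H (GT (G1 ++ Tri D T A :: G2) X B) -> der_elim H (GT D T A)
| de_elimL2 : forall G1 G2 D T A X B,
    der_elim H (GT (G1 ++ Tri D T A :: G2) X B) -> der_elim H (GT (G1 ++ Fm A :: G2) X B)
| de_elimR1 : forall G X1 X2 D T C B,
    der_elim H (GT G (X1 ++ Tri D T C :: X2) B) -> der_elim H (GT D T C)
| de_elimR2 : forall G X1 X2 D T C B,
    der_elim H (GT G (X1 ++ Tri D T C :: X2) B) -> der_elim H (GT G (X1 ++ Fm C :: X2) B).

Inductive der_intro (H : gtree -> Prop) : gtree -> Prop :=
| di_hyp : forall t, H t -> der_intro H t
| di_introL : forall G1 G2 D T A X B,
    der_intro H (GT D T A) -> der_intro H (GT (G1 ++ Fm A :: G2) X B) ->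
    der_intro H (GT (G1 ++ Tri D T A :: G2) X B)
| di_introR : forall G X1 X2 D T C B,
    der_intro H (GT D T C) -> der_intro H (GT G (X1 ++ Fm C :: X2) B) ->
    der_intro H (GT G (X1 ++ Tri D T C :: X2) B).

End Grounding.

(* Eliminating the
   items (Θ[Σ]) ▷ B of Γ and Δ one at a time yields every immediate sub-tree
   Θ[Σ] ▶ B, and leaves the claim in which each such item is replaced by B:
   this is the top component, and the other components are those of the
   sub-trees.  Read backwards, the same steps are ▷-introductions that
   rebuild the tree from its components. *)

From Stdlib Require Import List Arith.
Import ListNotations.

Section Grounding.
Variable F : Type.

Fixpoint item_nested_ind (P : item F -> Prop) (P_Fm : forall A, P (Fm A))
    (P_Tri : forall G D A, Forall P G -> Forall P D -> P (Tri G D A))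
    (i : item F) : P i :=
  let fix list_ind (l : list (item F)) : Forall P l :=
    match l with
    | [] => Forall_nil P
    | x :: l' => Forall_cons x (item_nested_ind P P_Fm P_Tri x) (list_ind l')
    end in
  match i with
  | Fm A => P_Fm A
  | Tri G D A => P_Tri G D A (list_ind G) (list_ind D)
  end.

Lemma gtree_subtree_ind (P : list (item F) -> list (item F) -> F -> Prop) :
  (forall G D A,
     (forall G' D' A', In (Tri G' D' A') (G ++ D) -> P G' D' A') -> P G D A) ->
  forall G D A, P G D A.
Proof.
  intros step G D A.
  pose (Q i := match i with Fm _ => True | Tri G D A => P G D A end).
  change (Q (Tri G D A)).
  apply item_nested_ind; [exact (fun _ => I) |].
  intros G' D' A' QG QD; apply step; intros G'' D'' A'' Hin.
  exact (proj1 (Forall_forall Q (G' ++ D')) (proj2 (Forall_app Q G' D') (conj QG QD)) _ Hin).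
Qed.

Lemma item_comps_Tri G D A :
  item_comps (Tri G D A) =
  GT (map (@strip F) G) (map (@strip F) D) A
    :: flat_map (@item_comps F) G ++ flat_map (@item_comps F) D.
Proof. reflexivity. Qed.

Lemma in_components (G D : list (item F)) (A : F) (c : gtree F) :
  In c (components (GT G D A)) ->
  c = GT (map (@strip F) G) (map (@strip F) D) A \/
  exists G' D' A', In (Tri G' D' A') (G ++ D) /\ In c (components (GT G' D' A')).
Proof.
  intros Hc; change (In c (item_comps (Tri G D A))) in Hc.
  rewrite item_comps_Tri, <- flat_map_app in Hc.
  destruct Hc as [<- | (x & Hx & Hc)%in_flat_map]; [now left | right].
  destruct x as [B | G' D' A']; [destruct Hc |].
  now exists G', D', A'.
Qed.

Lemma components_subtree (G D G' D' : list (item F)) (A A' : F) :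
  In (Tri G' D' A') (G ++ D) ->
  incl (components (GT G' D' A')) (components (GT G D A)).
Proof.
  intros Hin c Hc; change (In c (item_comps (Tri G D A))); rewrite item_comps_Tri, <- flat_map_app.
  right; apply in_flat_map; now exists (Tri G' D' A').
Qed.

(* [plug] puts a list in the Γ or in the Δ position of a fixed claim, so the
   left and the right rules are handled by the same lemma. *)
Section ElimAtPosition.
Variables (H : gtree F -> Prop) (plug : list (item F) -> gtree F).
Hypothesis elim_premise : forall Pre Post G D A,
  der_elim H (plug (Pre ++ Tri G D A :: Post)) -> der_elim H (GT G D A).
Hypothesis elim_conclusion : forall Pre Post G D A,
  der_elim H (plug (Pre ++ Tri G D A :: Post)) ->
  der_elim H (plug (Pre ++ Fm A :: Post)).

Lemma der_elim_strip : forall L Pre,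
  der_elim H (plug (Pre ++ L)) ->
  der_elim H (plug (Pre ++ map (@strip F) L)) /\
  (forall G D A, In (Tri G D A) L -> der_elim H (GT G D A)).
Proof.
  induction L as [| x L IH]; intros Pre HL; [split; [exact HL | contradiction] |].
  assert (Hstrip : der_elim H (plug (Pre ++ strip x :: L))).
  { destruct x as [B | G D A]; [exact HL | exact (elim_conclusion _ _ _ _ _ HL)]. }
  change (Pre ++ strip x :: L) with (Pre ++ [strip x] ++ L) in Hstrip.
  rewrite app_assoc in Hstrip.
  destruct (IH _ Hstrip) as [HL' Hsub]; rewrite <- app_assoc in HL'.
  split; [exact HL' |].
  intros G D A [-> | Hin]; [exact (elim_premise _ _ _ _ _ HL) | exact (Hsub _ _ _ Hin)].
Qed.

End ElimAtPosition.

Section IntroAtPosition.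
Variables (H : gtree F -> Prop) (plug : list (item F) -> gtree F).
Hypothesis intro : forall Pre Post G D A,
  der_intro H (GT G D A) -> der_intro H (plug (Pre ++ Fm A :: Post)) ->
  der_intro H (plug (Pre ++ Tri G D A :: Post)).

Lemma der_intro_unstrip : forall L Pre,
  (forall G D A, In (Tri G D A) L -> der_intro H (GT G D A)) ->
  der_intro H (plug (Pre ++ map (@strip F) L)) ->
  der_intro H (plug (Pre ++ L)).
Proof.
  induction L as [| x L IH]; intros Pre Hsub HL; [exact HL |].
  assert (Hstrip : der_intro H (plug (Pre ++ strip x :: L))).
  { change (Pre ++ strip x :: L) with (Pre ++ [strip x] ++ L); rewrite app_assoc.
    apply IH; [intros; apply Hsub; now right | now rewrite <- app_assoc]. }
  destruct x as [B | G D A]; [exact Hstrip |].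
  apply intro; [apply Hsub; now left | exact Hstrip].
Qed.

End IntroAtPosition.

Lemma der_elim_components (H : gtree F -> Prop) (G D : list (item F)) (A : F) :
  der_elim H (GT G D A) -> forall c, In c (components (GT G D A)) -> der_elim H c.
Proof.
  revert G D A.
  apply (gtree_subtree_ind (fun G D A =>
           der_elim H (GT G D A) -> forall c, In c (components (GT G D A)) -> der_elim H c)).
  intros G D A IH Ht c Hc.
  destruct (der_elim_strip H (fun L => GT G L A)
              (fun Pre Post G' D' C HL => de_elimR1 Pre Post G' D' C HL)
              (fun Pre Post G' D' C HL => de_elimR2 Pre Post G' D' C HL)
              D [] Ht) as [HD subD].
  destruct (der_elim_strip H (fun L => GT L (map (@strip F) D) A)
              (fun Pre Post G' D' C HL => de_elimL1 Pre Post G' D' C HL)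
              (fun Pre Post G' D' C HL => de_elimL2 Pre Post G' D' C HL)
              G [] HD) as [HGD subG].
  apply in_components in Hc as [-> | (G' & D' & A' & Hin & Hc')]; [exact HGD |].
  apply (IH G' D' A' Hin); [| exact Hc'].
  apply in_app_or in Hin as [Hin | Hin]; [exact (subG _ _ _ Hin) | exact (subD _ _ _ Hin)].
Qed.

Lemma der_intro_components (G D : list (item F)) (A : F) :
  der_intro (fun c => In c (components (GT G D A))) (GT G D A).
Proof.
  apply (gtree_subtree_ind (fun G D A => forall H : gtree F -> Prop,
           (forall c, In c (components (GT G D A)) -> H c) -> der_intro H (GT G D A))).
  2: exact (fun c Hc => Hc).
  intros G0 D0 A0 IH H Hcomps.
  assert (sub : forall G' D' A', In (Tri G' D' A') (G0 ++ D0) -> der_intro H (GT G' D' A')).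
  { intros G' D' A' Hin; apply (IH _ _ _ Hin).
    intros c Hc; apply Hcomps; eapply components_subtree; eassumption. }
  apply (der_intro_unstrip H (fun L => GT L D0 A0)
           (fun Pre Post G' D' C HGDC HL => di_introL Pre Post HGDC HL) G0 []).
  { intros; apply sub, in_or_app; now left. }
  apply (der_intro_unstrip H (fun L => GT (map (@strip F) G0) L A0)
           (fun Pre Post G' D' C HGDC HL => di_introR Pre Post HGDC HL) D0 []).
  { intros; apply sub, in_or_app; now right. }
  apply di_hyp, Hcomps; now left.
Qed.

End Grounding.

Theorem mainTheorem5 (F : Type) (t : gtree F) :
  1 < gsize t ->
  (forall c, In c (components t) -> der_elim (fun s => s = t) c) /\
  der_intro (fun c => In c (components t)) t.
Proof.
  intros _; destruct t as [G D A]; split.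
  - apply der_elim_components, de_hyp; reflexivity.
  - apply der_intro_components.
Qed.
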